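(* Let $a_1<a_2<\dots<a_n$ be positive integers with $a_i\le 2i-1$ for all $i$. Then $$\sum_{k=1}^{n}\det_{1\le i,j\le n}\left[\frac{1}{(a_i-j)!}\cdot\begin{cases}1 & i\ne k\\ (a_i-j)(a_i-j-1) & i=k\end{cases}\right]=\left(\sum_{k=1}^n (a_k-k)(a_k-2n+k-1)\right)\det_{1\le i,j\le n}\left[\frac{1}{(a_i-j)!}\right].$$
   Context: Convention: $1/m!=0$ for negative integers $m$ (so the corresponding matrix entries vanish). *)

From HB Require Import structures.
From mathcomp Require Import all_boot all_order all_algebra.
Set Implicit Arguments. Unset Strict Implicit. Unset Printing Implicit Defensive.
Import Order.TTheory GRing.Theory Num.Theory.
Local Open Scope ring_scope.

(* 1/m! as a rational, with the convention 1/m! = 0 for negative integers m. *)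
Definition invfact (m : int) : rat :=
  match m with
  | Posz k => (k`!%:R)^-1
  | Negz _ => 0
  end.

(* Expanding the k-th determinant along its modified row k turns the left-hand
   side into the double sum over k, j of (a_k - j)(a_k - j - 1) A_kj C_kj, with
   A = [1/(a_i - j)!] and C its cofactor matrix.  Write
   (y - x)(y - x - 1) = y^2 - x^2 - (2x + 1)(y - x).  The first two parts are
   row and column expansions of det A.  For the third, (a_k - j) A_kj = A_k,j+1,
   so column j contributes an alien-cofactor sum, which vanishes for every
   column but the last.  Hence the weights 2j + 1 may all be replaced by
   2n + 1, and the remaining total is again a combination of row and column
   expansions, equal to sum_k (a_k - k) det A. *)
From HB Require Import structures.
From mathcomp Require Import all_boot all_order all_algebra.
From mathcomp Require Import ring.
Set Implicit Arguments. Unset Strict Implicit. Unset Printing Implicit Defensive.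
Import Order.TTheory GRing.Theory Num.Theory.
Local Open Scope ring_scope.

Lemma invfactS (z : int) : invfact z * z%:~R = invfact (z - 1).
Proof.
case: z => [[|k]|k]; first by rewrite mulr0.
- have -> : Posz k.+1 - 1 = Posz k by rewrite -addn1 PoszD addrK.
  rewrite /= factS natrM invfM mulrC mulrA -[(Posz k.+1)%:~R]/(k.+1%:R).
  by rewrite divff ?mul1r // pnatr_eq0.
- by rewrite mul0r.
Qed.

Section CofactorSums.

Variables (R : comPzRingType) (n : nat).
Implicit Types (A : 'M[R]_n) (w : 'I_n -> 'I_n -> R).

Lemma sum_det_row_weights A w :
  \sum_(k < n) \det (\matrix_(i, j) (A i j * (if i == k then w i j else 1)))
  = \sum_(k < n) \sum_(j < n) w k j * (A k j * cofactor A k j).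
Proof.
apply: eq_bigr => k _; rewrite (expand_det_row _ k); apply: eq_bigr => j _.
have -> : cofactor (\matrix_(i, j) (A i j * (if i == k then w i j else 1))) k j
          = cofactor A k j.
  rewrite /cofactor; congr (_ * \det _); apply/matrixP => i' j'.
  by rewrite !mxE eq_sym (negbTE (neq_lift k i')) mulr1.
by rewrite !mxE eqxx mulrA [w k j * _]mulrC.
Qed.

Lemma sum_mul_cofactor_col A (j j' : 'I_n) :
  \sum_(k < n) A k j' * cofactor A k j = (j == j')%:R * \det A.
Proof.
have := congr1 (fun M : 'M[R]_n => M j j') (mul_adj_mx A).
rewrite !mxE mulr_natl => <-.
by apply: eq_bigr => k _; rewrite mxE mulrC.
Qed.

End CofactorSums.

Section ShiftedColumns.

(* The entries f k j are given for every column j : nat, so the shift of the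
   last column of A, column n, makes sense although it lies outside A. *)
Variables (R : comPzRingType) (n : nat) (f : 'I_n -> nat -> R).
Variables (x : nat -> R) (y : 'I_n -> R).
Hypothesis f_shift : forall k j, f k j.+1 = f k j * (y k - x j).

Let A : 'M[R]_n := \matrix_(k, j) f k j.
Let C k j := A k j * cofactor A k j.

Lemma shifted_col_sum_eq0 (j : 'I_n) :
  (j.+1 < n)%N -> \sum_(k < n) (y k - x j) * C k j = 0.
Proof.
move=> lt_j1n; pose j1 : 'I_n := Ordinal lt_j1n.
have -> : \sum_(k < n) (y k - x j) * C k j = \sum_(k < n) A k j1 * cofactor A k j.
  by apply: eq_bigr => k _; rewrite /C !mxE mulrA [_ * f k j]mulrC -f_shift.
rewrite sum_mul_cofactor_col.
have /negbTE -> : j != j1 by rewrite -val_eqE /= neq_ltn ltnSn.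
by rewrite mul0r.
Qed.

Lemma sum_shifted_cols :
  \sum_(j < n) \sum_(k < n) (y k - x j) * C k j
  = \sum_(k < n) (y k - x k) * \det A.
Proof.
under eq_bigr do under eq_bigr do rewrite mulrBl.
under eq_bigr do rewrite sumrB.
rewrite sumrB exchange_big /= /C.
under eq_bigr do rewrite -mulr_sumr -expand_det_row.
under [X in _ - X]eq_bigr do rewrite -mulr_sumr -expand_det_col.
by rewrite -sumrB; apply: eq_bigr => k _; rewrite mulrBl.
Qed.

Lemma sum_weighted_shifted_cols (v : nat -> R) :
  \sum_(j < n) v j * \sum_(k < n) (y k - x j) * C k j
  = v n.-1 * \sum_(k < n) (y k - x k) * \det A.
Proof.
rewrite -sum_shifted_cols mulr_sumr; apply: eq_bigr => j _.
have [lt_j1n | ge_j1n] := ltnP j.+1 n; first by rewrite shifted_col_sum_eq0 ?mulr0.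
suff -> : n.-1 = j by [].
have n_gt0 : (0 < n)%N := leq_ltn_trans (leq0n j) (ltn_ord j).
by apply/eqP; rewrite -eqSS prednK // eqn_leq ge_j1n ltn_ord.
Qed.

Lemma sum_det_shifted_row_weights :
  \sum_(k < n) \det (\matrix_(i, j)
     (A i j * (if i == k then (y i - x j) * (y i - x j - 1) else 1)))
  = \sum_(k < n) (y k ^+ 2 - x k ^+ 2 - (x n.-1 *+ 2 + 1) * (y k - x k)) * \det A.
Proof.
have weight k (j : 'I_n) : (y k - x j) * (y k - x j - 1) * C k j
    = y k ^+ 2 * C k j - x j ^+ 2 * C k j - (x j *+ 2 + 1) * ((y k - x j) * C k j).
  by ring.
have rows : \sum_(k < n) \sum_(j < n) y k ^+ 2 * C k j
            = \sum_(k < n) y k ^+ 2 * \det A.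
  by apply: eq_bigr => k _; rewrite -mulr_sumr -expand_det_row.
have cols : \sum_(k < n) \sum_(j < n) x j ^+ 2 * C k j
            = \sum_(k < n) x k ^+ 2 * \det A.
  by rewrite exchange_big; apply: eq_bigr => j _; rewrite -mulr_sumr -expand_det_col.
have shifts : \sum_(k < n) \sum_(j < n) (x j *+ 2 + 1) * ((y k - x j) * C k j)
    = (x n.-1 *+ 2 + 1) * \sum_(k < n) (y k - x k) * \det A.
  rewrite exchange_big -(sum_weighted_shifted_cols (fun j => x j *+ 2 + 1)) /=.
  by apply: eq_bigr => j _; rewrite mulr_sumr.
rewrite sum_det_row_weights.
under eq_bigr do under eq_bigr do rewrite weight.
under eq_bigr do rewrite !sumrB.
rewrite !sumrB rows cols shifts mulr_sumr -!sumrB.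
by apply: eq_bigr => k _; ring.
Qed.

End ShiftedColumns.

(* The identity holds for every sequence a. *)
Theorem lemma4p2 (n : nat) (a : 'I_n -> nat)
    (hpos : forall i, (0 < a i)%N)
    (hinc : forall i j : 'I_n, (i < j)%N -> (a i < a j)%N)
    (hbnd : forall i : 'I_n, (a i <= 2 * i.+1 - 1)%N) :
  \sum_(k < n)
     \det (\matrix_(i < n, j < n)
             (invfact ((a i)%:Z - (j.+1)%:Z) *
              (if i == k then
                 (((a i)%:Z - (j.+1)%:Z) * ((a i)%:Z - (j.+1)%:Z - 1))%:~R
               else 1)))
  = (\sum_(k < n)
        (((a k)%:Z - (k.+1)%:Z) * ((a k)%:Z - (2 * n)%:Z + (k.+1)%:Z - 1))%:~R)
    * \det (\matrix_(i < n, j < n) invfact ((a i)%:Z - (j.+1)%:Z)).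
Proof.
pose f k (j : nat) := invfact ((a k)%:Z - (j.+1)%:Z).
pose x (j : nat) : rat := j.+1%:R.
pose y k : rat := (a k)%:R.
have f_shift k j : f k j.+1 = f k j * (y k - x j).
  have -> : y k - x j = ((a k)%:Z - (j.+1)%:Z)%:~R by rewrite intrB.
  rewrite /f invfactS; congr invfact.
  by rewrite -addn1 PoszD opprD addrA.
transitivity (\sum_(k < n) \det (\matrix_(i, j) ((\matrix_(k, j) f k j) i j *
    (if i == k then (y i - x j) * (y i - x j - 1) else 1)))).
  apply: eq_bigr => k _; congr (\det _); apply/matrixP => i j.
  by rewrite !mxE intrM !intrB.
rewrite (sum_det_shifted_row_weights f_shift) mulr_suml.
apply: eq_bigr => k _; congr (_ * _).
have n_gt0 : (0 < n)%N := leq_ltn_trans (leq0n k) (ltn_ord k).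
rewrite /x /y prednK //; ring.
Qed.
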